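(* Let $m$ be a prime power and let $l,s,t$ be positive integers such that $m\geq l-1$ and $2t-1\leq l$. Define $q=(s-1)m+1$. Suppose that $c\geq t$ is an integer such that $l=c(t-1)+r$ for some $r\in\{t,t+1,\ldots,c\}$. If there exists an $s$-ary $c$-frameproof code of length $l$ and cardinality $M$ satisfying Property $P(t)$, then there exists a $q$-ary $c$-frameproof code of length $l$ and cardinality $Mm^t$.
   Context: Let $F$ be a finite alphabet and $l$ a positive integer. For $P\subseteq F^l$, the set of descendants is $desc(P)=\{x\in F^l: \text{for every } i\in\{1,\ldots,l\} \text{ there is } y\in P \text{ with } x_i=y_i\}$. For an integer $c\geq 2$, a $c$-frameproof code is a subset $C\subseteq F^l$ such that $desc(P)\cap C=P$ for every $P\subseteq C$ with $|P|\leq c$. A code is $q$-ary if its alphabet has size $q$. An $s$-ary $c$-frameproof code $C$ of length $l$ over an alphabet $S$ of size $s$ satisfies Property $P(t)$ if there is a special element $\infty\in S$ such that every codeword contains at most $t-1$ coordinates equal to $\infty$, and every codeword is uniquely determined by specifying $t$ of its components that are not equal to $\infty$ (i.e., if $x,y\in C$ and there are $t$ coordinates $j$ with $x_j=y_j\neq\infty$, then $x=y$). *)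

From mathcomp Require Import all_boot.
Set Implicit Arguments. Unset Strict Implicit. Unset Printing Implicit Defensive.

Definition word (F : finType) (l : nat) := {ffun 'I_l -> F}.

Definition desc (F : finType) (l : nat) (P : {set word F l}) : {set word F l} :=
  [set x : word F l | [forall i : 'I_l, [exists y in P, x i == y i]]].

(* C is a c-frameproof code: desc(P) ∩ C = P for all P ⊆ C with |P| <= c.
   (The paper requires c >= 2; this is imposed as a hypothesis where used.) *)
Definition frameproof (F : finType) (l c : nat) (C : {set word F l}) : Prop :=
  forall P : {set word F l}, P \subset C -> #|P| <= c -> desc P :&: C = P.

Definition propertyP (S : finType) (l t : nat) (C : {set word S l}) : Prop :=
  exists inf : S,
    (forall x, x \in C -> #|[set j : 'I_l | x j == inf]| <= t - 1) /\
    (forall x y, x \in C -> y \in C ->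
       t <= #|[set j : 'I_l | (x j == y j) && (x j != inf)]| -> x = y).

Definition prime_power (m : nat) : Prop :=
  exists p k, prime p /\ 0 < k /\ m = p ^ k.

From mathcomp Require Import all_boot all_algebra all_field zify.
Set Implicit Arguments. Unset Strict Implicit. Unset Printing Implicit Defensive.
Import GRing.Theory.

(* Concatenate the outer code with an extended Reed-Solomon code of dimension
   t over GF(m), evaluated at l <= m + 1 points of the projective line.  The
   outer symbol inf stays a single new symbol, any other outer symbol u at
   coordinate j becomes the pair (u, inner symbol at j).  Distinct outer words
   agree off inf in at most t - 1 coordinates (Property P(t)), distinct inner
   words agree in at most t - 1 coordinates (a nonzero polynomial of degree
   < t has at most t - 1 projective roots), so every codeword has at most
   t - 1 symbols inf and distinct codewords agree off inf in at most t - 1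
   coordinates.  A codeword outside a coalition P with |P| <= c thus agrees
   with P in at most (c + 1)(t - 1) < l coordinates and is not a descendant. *)

Definition erasures (F : finType) (l : nat) (z : F) (x : word F l) : {set 'I_l} :=
  [set j | x j == z].

Definition agree_off (F : finType) (l : nat) (z : F) (x y : word F l) : {set 'I_l} :=
  [set j | (x j == y j) && (x j != z)].

Lemma leq_card_bigcup (I T : finType) (A : {pred I}) (F : I -> {set T}) :
  #|\bigcup_(i in A) F i| <= \sum_(i in A) #|F i|.
Proof.
elim/big_rec2: _ => [|i U n _ leUn]; first by rewrite cards0.
by rewrite (leq_trans (leq_card_setU _ _).1) ?leq_add2l.
Qed.

Lemma card_erasures_agree_off_self (F : finType) (l : nat) (z : F) (x : word F l) :
  #|erasures z x| + #|agree_off z x x| = l.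
Proof.
have -> : agree_off z x x = ~: erasures z x by apply/setP => j; rewrite !inE eqxx.
by rewrite cardsC card_ord.
Qed.

Lemma propertyP_agree_off (S : finType) (l t : nat) (C : {set word S l}) :
  0 < t -> propertyP t C ->
  exists inf : S, {in C, forall x, #|erasures inf x| <= t - 1} /\
                  {in C &, forall x y, x != y -> #|agree_off inf x y| <= t - 1}.
Proof.
move=> t_gt0 [inf [erC agC]]; exists inf; split=> // x y xC yC.
by rewrite leqNgt subn1 prednK //; apply: contra => le_t; apply/eqP/agC.
Qed.

Lemma frameproof_of_low_agreement (F : finType) (l c w : nat) (z : F)
    (C : {set word F l}) :
  c.+1 * w < l ->
  {in C, forall x, #|erasures z x| <= w} ->
  {in C &, forall x y, x != y -> #|agree_off z x y| <= w} ->
  frameproof c C.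
Proof.
move=> lt_l erC agC P sPC leP; apply/setP => x; rewrite inE.
have [xP|xNP] := boolP (x \in P).
  rewrite (subsetP sPC) // andbT inE; apply/forallP => j.
  by apply/existsP; exists x; rewrite xP eqxx.
apply/negbTE/negP; rewrite inE => /andP [/forallP xdesc xC].
have erx := erC x xC.
have cover : [set: 'I_l] \subset erasures z x :|: \bigcup_(y in P) agree_off z x y.
  apply/subsetP => j _; have /existsP [y /andP [yP /eqP xyj]] := xdesc j.
  rewrite !inE; case: eqP => //= xjNz; apply/bigcupP; exists y => //.
  by rewrite !inE xyj eqxx; apply/eqP; rewrite -xyj.
have agP : #|\bigcup_(y in P) agree_off z x y| <= #|P| * w.
  rewrite -sum_nat_const; apply: leq_trans (leq_card_bigcup _ _) _.
  apply: leq_sum => y yP.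
  by apply: (agC _ _ xC (subsetP sPC _ yP)); apply: contraNneq xNP => ->.
have := leq_trans (subset_leq_card cover) (leq_card_setU _ _).1.
rewrite cardsT card_ord => le_l.
have := leq_mul leP (leqnn w); lia.
Qed.

Section ExtendedReedSolomon.
Variables (K : finFieldType) (k : nat).

(* At infinity, the coefficient of degree k - 1: the homogeneous value of a
   polynomial of degree < k at the point (1 : 0). *)
Definition proj_eval (p : {poly K}) (o : option K) : K :=
  (if o is Some x then p.[x] else p`_k.-1)%R.

Lemma proj_evalB p q o : proj_eval (p - q) o = (proj_eval p o - proj_eval q o)%R.
Proof. by case: o => [x|]; rewrite /= (hornerD, coefB) ?hornerN. Qed.

Lemma card_proj_roots (p : {poly K}) :
  p != 0%R -> size p <= k -> #|[set o | proj_eval p o == 0%R]| <= k.-1.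
Proof.
move=> p0 szp; set R := [set x | root p x].
have ltR : #|R| < size p.
  rewrite cardE; apply: max_poly_roots => //; last exact: enum_uniq.
  by apply/allP => x; rewrite mem_enum inE.
have [inf0|infN0] := eqVneq (p`_k.-1)%R 0%R.
  have sub : [set o | proj_eval p o == 0%R] \subset None |: (Some @: R).
    apply/subsetP => -[x|] x0; rewrite !inE //=.
    by rewrite (imset_f Some) // inE; rewrite inE in x0.
  have szp' : size p <= k.-1.
    rewrite leqNgt; apply: contra p0 => ltp; rewrite -lead_coef_eq0 lead_coefE.
    by rewrite (_ : (size p).-1 = k.-1) ?inf0 //; rewrite -!subn1; lia.
  apply: leq_trans (subset_leq_card sub) _.
  by rewrite cardsU1 card_imset; [lia | exact: Some_inj].
have leSR : #|Some @: R| <= k.-1 by rewrite card_imset; [lia | exact: Some_inj].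
apply: leq_trans leSR.
apply/subset_leq_card/subsetP => -[x|]; rewrite inE => /= x0.
  by rewrite (imset_f Some) // inE.
by rewrite x0 in infN0.
Qed.

Variables (l : nat) (e : 'I_l -> option K).
Hypothesis e_inj : injective e.

Definition rs_word (a : 'rV[K]_k) : word K l :=
  [ffun j => proj_eval (rVpoly a) (e j)].

Lemma card_rs_word_agree (a b : 'rV[K]_k) :
  a != b -> #|[set j | rs_word a j == rs_word b j]| <= k.-1.
Proof.
move=> ab; rewrite -(card_imset _ e_inj).
apply: leq_trans (card_proj_roots (p := rVpoly (a - b)) _ (size_poly _ _)).
  apply/subset_leq_card/subsetP => _ /imsetP [j + ->].
  by rewrite !inE !ffunE linearB proj_evalB subr_eq0.
apply: contra ab => /eqP/(congr1 (@poly_rV _ k)).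
by rewrite rVpolyK linear0 => /eqP; rewrite subr_eq0.
Qed.

End ExtendedReedSolomon.

Section Concatenation.
Variables (S K A : finType) (l : nat) (inf : S) (inner : A -> word K l).

Definition concat_word (x : word S l) (a : A) :
    word (option ({u : S | u != inf} * K)) l :=
  [ffun j => omap (fun u => (u, inner a j)) (insub (x j))].

Lemma erasures_concat_word x a : erasures None (concat_word x a) = erasures inf x.
Proof.
apply/setP => j; rewrite !inE ffunE.
by case: insubP => [u /negbTE -> //|]; rewrite negbK => ->.
Qed.

Lemma agree_off_concat_word x a y b :
  agree_off None (concat_word x a) (concat_word y b) =
  agree_off inf x y :&: [set j | inner a j == inner b j].
Proof.
apply/setP => j; rewrite !inE !ffunE.
case: insubP => [u xjN xju|]; last by rewrite negbK => /eqP ->; rewrite eqxx !andbF.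
rewrite xjN andbT /=; case: insubP => [v yjN yjv|]; last first.
  by rewrite negbK => /eqP ->; rewrite (negbTE xjN).
by rewrite /= andbT (inj_eq (@Some_inj _)) -xju -yjv xpair_eqE (inj_eq val_inj).
Qed.

Variables (w : nat) (C : {set word S l}).
Hypothesis erasuresC : {in C, forall x, #|erasures inf x| <= w}.
Hypothesis agreeC : {in C &, forall x y, x != y -> #|agree_off inf x y| <= w}.
Hypothesis agree_inner : forall a b, a != b -> #|[set j | inner a j == inner b j]| <= w.

Lemma card_agree_off_concat_word x a y b : x \in C -> y \in C -> (x, a) != (y, b) ->
  #|agree_off None (concat_word x a) (concat_word y b)| <= w.
Proof.
move=> xC yC; rewrite agree_off_concat_word xpair_eqE negb_and.
have [<- /= ab|xy _] := eqVneq x y.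
  by apply: leq_trans (agree_inner ab); rewrite subset_leq_card ?subsetIr.
by apply: leq_trans (agreeC xC yC xy); rewrite subset_leq_card ?subsetIl.
Qed.

Definition concat_code := [set concat_word xa.1 xa.2 | xa in setX C [set: A]].

Lemma concat_word_inj : 2 * w < l ->
  {in setX C [set: A] &, injective (fun xa => concat_word xa.1 xa.2)}.
Proof.
move=> ltl [x a] [y b] /setXP [xC _] /setXP [yC _] /= eqxy.
apply/eqP; apply: contraLR ltl => xyab; rewrite -leqNgt.
rewrite -(card_erasures_agree_off_self None (concat_word x a)) mul2n -addnn.
rewrite leq_add //; first by rewrite erasures_concat_word erasuresC.
by rewrite {2}eqxy card_agree_off_concat_word.
Qed.

Lemma card_concat_code : 2 * w < l -> #|concat_code| = #|C| * #|A|.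
Proof.
by move=> ltl; rewrite card_in_imset ?cardsX ?cardsT //; apply: concat_word_inj.
Qed.

Lemma frameproof_concat_code c : c.+1 * w < l -> frameproof c concat_code.
Proof.
move=> ltl; apply: (frameproof_of_low_agreement (z := None) ltl).
  by move=> _ /imsetP [[x a] /setXP [xC _] ->]; rewrite erasures_concat_word erasuresC.
move=> _ _ /imsetP [[x a] xaD ->] /imsetP [[y b] ybD ->] neq.
case/setXP: xaD => xC _; case/setXP: ybD => yC _.
by apply: card_agree_off_concat_word => //; apply: contraNneq neq => ->.
Qed.

End Concatenation.

Theorem lemma1 (m l s t c r M : nat) :
  prime_power m -> 0 < l -> 0 < s -> 0 < t ->
  l - 1 <= m -> 2 * t - 1 <= l ->
  2 <= c -> t <= c ->
  t <= r <= c -> l = c * (t - 1) + r ->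
  (exists (S : finType) (C : {set word S l}),
      #|S| = s /\ frameproof c C /\ propertyP t C /\ #|C| = M) ->
  exists (F : finType) (C : {set word F l}),
    #|F| = (s - 1) * m + 1 /\ frameproof c C /\ #|C| = M * m ^ t.
Proof.
move=> [p [k [p_pr [k_gt0 ->]]]] _ _ t_gt0 le_lm _ le2c _ /andP [le_tr _] def_l.
case=> S [C [cardS [_ [PC cardC]]]].
have [K _ cardK] := pPrimePowerField p_pr k_gt0.
have [inf [erC agC]] := propertyP_agree_off t_gt0 PC.
have [e e_inj] : exists e : 'I_l -> option K, injective e.
  have le_lK : l <= #|{: option K}| by rewrite card_option cardK; lia.
  by exists (fun j => enum_val (widen_ord le_lK j)) => i j /enum_val_inj [] /val_inj.
have agree_rs : forall a b : 'rV[K]_t, a != b ->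
    #|[set j | rs_word e a j == rs_word e b j]| <= t - 1.
  by move=> a b; rewrite subn1; apply: card_rs_word_agree.
have lt_l : c.+1 * (t - 1) < l by rewrite mulSn def_l; lia.
exists _, (concat_code inf (rs_word (k := t) e) C); split; [|split].
- by rewrite card_option card_prod card_sig cardC1 cardS cardK subn1 addn1.
- exact: frameproof_concat_code erC agC agree_rs c lt_l.
rewrite (card_concat_code erC agC agree_rs) ?card_mx ?cardK ?cardC ?mul1n //.
by apply: leq_ltn_trans lt_l; rewrite leq_mul2r ltnS (ltnW le2c) orbT.
Qed.
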